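(* Let $n\in\mathbb{Z}$ with $|n|\geq1$, $\alpha>0$, $R>0$ and $\kappa<\alpha^{-1}-\frac{r_0^2+n^2}{2R^2}$. If $$\left(\frac{6\,(1+n^2(2\ln2-1))}{\alpha^{-1}-\kappa}\right)^{1/2}<R,$$ then the Nehari manifold $\mathcal{M}$ is nonempty.
   Context: $r_0\approx2.404825$ is the first positive zero of the Bessel function $J_0$. $H$ is the completion of $\{u\in C^1[0,R]: u(0)=0=u(R)\}$ with respect to the inner product $(u,\tilde u)=\int_0^R\{ru_r\tilde u_r+\frac1r u\tilde u\}dr$. $\gamma_\kappa(u)=\frac12\int_0^R\{ru_r^2+\frac{n^2}{r}u^2-2(\alpha^{-1}-\kappa)ru^2+2\alpha^{-1}\frac{ru^2}{1+\alpha u^2}\}dr$ and $\mathcal{M}=\{u\in H\setminus\{0\}:\gamma_\kappa(u)=0\}$. *)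

From Stdlib Require Import Reals ZArith.
From Coquelicot Require Import Coquelicot.
Open Scope R_scope.

Definition J0 (x : R) : R :=
  Series (fun m : nat => (-1) ^ m / (INR (fact m)) ^ 2 * (x / 2) ^ (2 * m)).

Definition first_pos_zero_J0 (r0 : R) : Prop :=
  0 < r0 /\ J0 r0 = 0 /\ (forall x, 0 < x < r0 -> J0 x <> 0).

(* The generating class: u in C^1[0,R] with u(0) = 0 = u(R).
   (Every C^1 function on [0,R] extends to a C^1 function on the whole line,
   so we take u : R -> R of class C^1 on R; u_r is Derive u.) *)
Definition C1_0 (Rad : R) (u : R -> R) : Prop :=
  (forall x, ex_derive u x) /\ (forall x, continuous (Derive u) x) /\
  u 0 = 0 /\ u Rad = 0.

Definition normH2 (Rad : R) (u : R -> R) : R :=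
  RInt (fun r => r * (Derive u r) ^ 2 + / r * (u r) ^ 2) 0 Rad.

Definition gammak (n : Z) (alpha kappa Rad : R) (u : R -> R) : R :=
  / 2 * RInt (fun r => r * (Derive u r) ^ 2 + (IZR n) ^ 2 / r * (u r) ^ 2
                        - 2 * (/ alpha - kappa) * r * (u r) ^ 2
                        + 2 * / alpha * (r * (u r) ^ 2 / (1 + alpha * (u r) ^ 2))) 0 Rad.

(* An element of the completion H is (the class of) a Cauchy sequence of
   C^1_0 functions for the H-norm; it is the zero element iff the sequence
   is equivalent to 0, i.e. its norms tend to 0.  gamma_kappa extends to H by
   continuity, so its value on the class is lim gamma_kappa (u k). *)
Definition H_cauchy (Rad : R) (u : nat -> R -> R) : Prop :=
  (forall k, C1_0 Rad (u k)) /\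
  (forall eps : R, 0 < eps -> exists N : nat, forall k l : nat,
      (N <= k)%nat -> (N <= l)%nat -> normH2 Rad (fun r => u k r - u l r) < eps).

(* The Nehari set M = { u in H \ {0} : gamma_kappa(u) = 0 } is nonempty. *)
Definition Nehari_nonempty (n : Z) (alpha kappa Rad : R) : Prop :=
  exists u : nat -> R -> R,
    H_cauchy Rad u /\
    ~ is_lim_seq (fun k => normH2 Rad (u k)) 0 /\
    is_lim_seq (fun k => gammak n alpha kappa Rad (u k)) 0.

(* Write [Q] for the quadratic part of [2 gamma_kappa] and take test functions [phi], [psi]
   vanishing at [0] and [R], positive in between, with [Q phi < 0 < Q psi].  Along
   [u_t = t phi + psi] the remaining term of [gamma_kappa] is nonnegative, bounded by
   [R^2 / alpha^2] and continuous in [t], so [gamma_kappa u_t] is positive at [t = 0] and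
   negative for large [t]: it vanishes at some [t > 0], where [u_t > 0] on [(0, R)].
   The hypothesis on [R] gives [Q phi < 0] for [phi = r (R - r)] when [n^2 = 1] and for
   [phi = r^2 (R - r)] when [n^2 >= 4] (using [ln 2 > 2/3]); [psi = r (R - r)^k] has
   [Q psi > 0] for large [k], its mass concentrating near [0] where the [n^2 / r] term wins. *)

From Stdlib Require Import Reals Lra Lia ZArith.
From Coquelicot Require Import Coquelicot.
Open Scope R_scope.

Lemma continuous_pow_R (f : R -> R) (m : nat) x :
  continuous f x -> continuous (fun y => f y ^ m) x.
Proof.
  intros Hf. induction m as [|m IH]; simpl.
  - apply continuous_const.
  - apply (continuous_mult f (fun y => f y ^ m)); assumption.
Qed.

Ltac continuity_R := repeat first
  [ assumption
  | apply continuous_const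
  | apply continuous_id
  | match goal with
    | H : forall x, continuous ?f x |- continuous ?f _ => apply H
    | |- continuous (fun y => @?a y + @?b y) _ => apply (continuous_plus a b)
    | |- continuous (fun y => @?a y - @?b y) _ => apply (continuous_minus a b)
    | |- continuous (fun y => @?a y * @?b y) _ => apply (continuous_mult a b)
    | |- continuous (fun y => @?a y ^ ?m) _ => apply (continuous_pow_R a m)
    end ].

(* Coquelicot states equalities at its normed-module types, where [ring] and [field]
   do not apply. *)
Ltac as_R_eq := match goal with |- @eq _ ?x ?y => change (@eq R x y) end.

Lemma continuous_of_lipschitz (f : R -> R) (L : R) :
  (forall x y, Rabs (f x - f y) <= L * Rabs (x - y)) -> forall x, continuous f x.
Proof.
  intros Hf x. apply filterlim_locally. intros eps.
  set (delta := eps / (Rabs L + 1)).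
  assert (Hdelta : 0 < delta)
    by (apply Rdiv_lt_0_compat; [apply cond_pos | pose proof (Rabs_pos L); lra]).
  exists (mkposreal delta Hdelta). intros y Hy.
  change (Rabs (f y - f x) < eps).
  change (Rabs (y - x) < delta) in Hy.
  pose proof (Hf y x). pose proof (Rle_abs L). pose proof (Rabs_pos (y - x)).
  assert (Rabs L * Rabs (y - x) <= Rabs L * delta)
    by (apply Rmult_le_compat_l; [apply Rabs_pos | lra]).
  assert ((Rabs L + 1) * delta = eps) by (unfold delta; field; pose proof (Rabs_pos L); lra).
  nra.
Qed.

Lemma RInt_lipschitz_param (f : R -> R -> R) (g : R -> R) (a b : R) :
  a <= b -> (forall t, ex_RInt (f t) a b) -> ex_RInt g a b ->
  (forall t s r, a <= r <= b -> Rabs (f t r - f s r) <= Rabs (t - s) * g r) ->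
  forall t s, Rabs (RInt (f t) a b - RInt (f s) a b) <= Rabs (t - s) * RInt g a b.
Proof.
  intros Hab Ef Eg Hfg t s.
  assert (Ediff : ex_RInt (fun r => f t r - f s r) a b)
    by (apply (ex_RInt_minus (f t) (f s)); auto).
  rewrite <- (RInt_minus (f t) (f s)) by auto.
  replace (Rabs (t - s) * RInt g a b) with (RInt (fun r => Rabs (t - s) * g r) a b)
    by (apply (RInt_scal g a b (Rabs (t - s))); auto).
  eapply Rle_trans; [apply abs_RInt_le; auto|].
  apply RInt_le; auto.
  - apply (ex_RInt_norm (fun r => f t r - f s r)); auto.
  - apply (ex_RInt_scal (V := R_NormedModule)); auto.
  - intros r Hr. apply Hfg. lra.
Qed.

Definition sat (a x : R) : R := x ^ 2 / (1 + a * x ^ 2).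

Lemma sat_bounds (a x : R) : 0 < a -> 0 <= sat a x <= / a.
Proof.
  intros Ha. unfold sat. pose proof (pow2_ge_0 x).
  assert (HD : 0 < 1 + a * x ^ 2) by nra.
  split.
  - apply Rdiv_le_0_compat; assumption.
  - apply Rmult_le_reg_l with (a * (1 + a * x ^ 2)); [nra|].
    replace (a * (1 + a * x ^ 2) * (x ^ 2 / (1 + a * x ^ 2))) with (a * x ^ 2) by (field; lra).
    replace (a * (1 + a * x ^ 2) * / a) with (1 + a * x ^ 2) by (field; lra).
    lra.
Qed.

Lemma sat_lipschitz (a x y : R) : 0 < a ->
  Rabs (sat a x - sat a y) <= (1 + / a) * Rabs (x - y).
Proof.
  intros Ha. unfold sat.
  set (Dx := 1 + a * x ^ 2). set (Dy := 1 + a * y ^ 2).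
  assert (HDx : 1 <= Dx) by (unfold Dx; pose proof (pow2_ge_0 x); nra).
  assert (HDy : 1 <= Dy) by (unfold Dy; pose proof (pow2_ge_0 y); nra).
  (* [2 |z| <= 1 + z^2 <= (1 + /a) (1 + a z^2)] bounds [|x + y|] by the denominators. *)
  assert (Hz : forall z, 2 * Rabs z <= (1 + / a) * (1 + a * z ^ 2)).
  { intros z. pose proof (pow2_ge_0 z). pose proof (Rinv_0_lt_compat a Ha).
    replace ((1 + / a) * (1 + a * z ^ 2)) with (1 + z ^ 2 + (/ a + a * z ^ 2)) by (field; lra).
    rewrite <- pow2_abs. pose proof (pow2_ge_0 (Rabs z - 1)).
    assert (0 <= / a + a * z ^ 2) by nra. nra. }
  replace (x ^ 2 / Dx - y ^ 2 / Dy) with ((x - y) * (x + y) / (Dx * Dy))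
    by (unfold Dx, Dy in *; field; lra).
  unfold Rdiv. rewrite !Rabs_mult, (Rabs_pos_eq (/ _)) by (left; apply Rinv_0_lt_compat; nra).
  apply Rmult_le_reg_r with (Dx * Dy); [nra|].
  rewrite Rmult_assoc, Rinv_l by nra.
  pose proof (Hz x) as Hx. pose proof (Hz y) as Hy. fold Dx in Hx. fold Dy in Hy.
  pose proof (Rabs_triang x y). pose proof (Rabs_pos (x - y)). pose proof (Rabs_pos x).
  pose proof (Rabs_pos y). pose proof (Rinv_0_lt_compat a Ha).
  assert (2 * Rabs (x + y) <= (1 + / a) * Dx * Dy * 2) by nra.
  nra.
Qed.

Lemma continuous_sat (a x : R) : 0 < a -> continuous (sat a) x.
Proof.
  intros Ha. apply (continuous_of_lipschitz _ (1 + / a)). intros; apply sat_lipschitz; assumption.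
Qed.

Lemma concave_quadratic_perturbed_root (a b d M : R) (e : R -> R) :
  a < 0 -> 0 < d -> (forall t, 0 <= e t <= M) -> (forall t, continuous e t) ->
  exists z, 0 < z /\ a * z ^ 2 + b * z + d + e z = 0.
Proof.
  intros Ha Hd He Ce.
  set (f := fun t => - (a * t ^ 2 + b * t + d + e t)).
  assert (Cf : continuity f).
  { intros t. apply continuity_pt_filterlim. unfold f.
    apply (continuous_opp (fun t => a * t ^ 2 + b * t + d + e t)). continuity_R. }
  set (T := (Rabs b + d + M) / - a + 1).
  assert (HM : 0 <= M) by (destruct (He 0); lra).
  assert (HT : 1 <= T) by (unfold T; assert (0 <= (Rabs b + d + M) / - a)
    by (apply Rdiv_le_0_compat; pose proof (Rabs_pos b); lra); lra).
  assert (HaT : - a * T = Rabs b + d + M - a) by (unfold T; field; lra).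
  assert (f0 : f 0 < 0) by (unfold f; destruct (He 0); simpl; lra).
  assert (fT : 0 < f T).
  { unfold f. destruct (He T). pose proof (Rle_abs b). pose proof (Rabs_pos b).
    assert (a * T ^ 2 = - (T * (Rabs b + d + M - a))) by (rewrite <- HaT; ring).
    nra. }
  destruct (IVT f 0 T Cf ltac:(lra) f0 fT) as [z [[Hz0 _] Hz]].
  exists z. split.
  - destruct Hz0 as [Hz0 | <-]; [assumption | lra].
  - unfold f in Hz. lra.
Qed.

Lemma RInt_lincomb4 (f1 f2 f3 f4 : R -> R) (a b c1 c2 c3 c4 : R) :
  ex_RInt f1 a b -> ex_RInt f2 a b -> ex_RInt f3 a b -> ex_RInt f4 a b ->
  RInt (fun r => c1 * f1 r + c2 * f2 r + c3 * f3 r + c4 * f4 r) a b =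
  c1 * RInt f1 a b + c2 * RInt f2 a b + c3 * RInt f3 a b + c4 * RInt f4 a b.
Proof.
  intros E1 E2 E3 E4. apply is_RInt_unique.
  apply (is_RInt_plus (fun r => c1 * f1 r + c2 * f2 r + c3 * f3 r) (fun r => c4 * f4 r)).
  apply (is_RInt_plus (fun r => c1 * f1 r + c2 * f2 r) (fun r => c3 * f3 r)).
  apply (is_RInt_plus (fun r => c1 * f1 r) (fun r => c2 * f2 r)).
  all: apply (is_RInt_scal (V := R_NormedModule));
       apply (RInt_correct (V := R_CompleteNormedModule)); assumption.
Qed.

Lemma Nehari_nonempty_of_root (n : Z) (alpha kappa Rad : R) (u : R -> R) :
  C1_0 Rad u -> normH2 Rad u <> 0 -> gammak n alpha kappa Rad u = 0 ->
  Nehari_nonempty n alpha kappa Rad.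
Proof.
  intros Hu Hnorm Hgamma. exists (fun _ => u). split; [split|split].
  - intros _. exact Hu.
  - intros eps Heps. exists 0%nat. intros k l _ _. unfold normH2.
    rewrite (RInt_ext _ (fun _ => 0)).
    + rewrite RInt_const. change (scal (Rad - 0) 0) with ((Rad - 0) * 0). lra.
    + intros r _. rewrite (Derive_ext _ (fun _ => 0)) by (intro; ring).
      rewrite Derive_const. replace (u r - u r) with 0 by ring. simpl. ring.
  - intros Hlim. apply is_lim_seq_unique in Hlim. rewrite Lim_seq_const in Hlim.
    injection Hlim. exact Hnorm.
  - rewrite Hgamma. apply is_lim_seq_const.
Qed.

(* Test functions are written [r * v r]: the [n^2 / r] term of [gamma_kappa] then becomes
   [n^2 r v^2], with no division by [r].  [bform] polarizes the quadratic part of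
   [2 gamma_kappa], with [c] standing for [alpha^-1 - kappa]. *)
Definition bform_density (n : Z) (c : R) (v dv w dw : R -> R) (r : R) : R :=
  r * dv r * dw r + IZR n ^ 2 * r * (v r * w r) - 2 * c * r ^ 3 * (v r * w r).

Definition bform (n : Z) (c Rad : R) (v dv w dw : R -> R) : R :=
  RInt (bform_density n c v dv w dw) 0 Rad.

Definition positive_profile (Rad : R) (v dv : R -> R) : Prop :=
  (forall r, is_derive (fun r => r * v r) r (dv r)) /\
  (forall r, continuous v r) /\ (forall r, continuous dv r) /\
  v Rad = 0 /\ (forall r, 0 < r < Rad -> 0 < v r).

Definition pencil (v w : R -> R) (t r : R) : R := r * (t * v r + w r).

Definition sat_energy (alpha Rad : R) (v w : R -> R) (t : R) : R :=
  RInt (fun r => r * sat alpha (pencil v w t r)) 0 Rad.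

Section Pencil.

Variables (n : Z) (alpha kappa Rad : R) (v dv w dw : R -> R).
Hypotheses (Halpha : 0 < alpha) (HRad : 0 < Rad).
Hypotheses (Dv : forall r, is_derive (fun r => r * v r) r (dv r))
           (Dw : forall r, is_derive (fun r => r * w r) r (dw r)).
Hypotheses (Cv : forall r, continuous v r) (Cdv : forall r, continuous dv r)
           (Cw : forall r, continuous w r) (Cdw : forall r, continuous dw r).

Let c := / alpha - kappa.

Lemma pencil_derive (t r : R) : is_derive (pencil v w t) r (t * dv r + dw r).
Proof.
  apply (is_derive_ext (fun r => t * (r * v r) + r * w r)); [intros; unfold pencil; as_R_eq; ring|].
  apply (is_derive_plus (fun r => t * (r * v r)) (fun r => r * w r)); [|apply Dw].
  apply (is_derive_scal (fun r => r * v r)). apply Dv.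
Qed.

Lemma continuous_pencil (t r : R) : continuous (pencil v w t) r.
Proof. unfold pencil. continuity_R. Qed.

Lemma ex_RInt_sat_pencil (t : R) : ex_RInt (fun r => r * sat alpha (pencil v w t r)) 0 Rad.
Proof.
  apply (ex_RInt_continuous (V := R_CompleteNormedModule)). intros r _.
  apply (continuous_mult (fun r => r) (fun r => sat alpha (pencil v w t r)));
    [apply continuous_id|].
  apply (continuous_comp (pencil v w t) (sat alpha));
    [apply continuous_pencil | apply continuous_sat; assumption].
Qed.

Lemma ex_RInt_bform (f df g dg : R -> R) :
  (forall r, continuous f r) -> (forall r, continuous df r) ->
  (forall r, continuous g r) -> (forall r, continuous dg r) ->
  ex_RInt (bform_density n c f df g dg) 0 Rad.
Proof.
  intros Cf Cdf Cg Cdg. apply (ex_RInt_continuous (V := R_CompleteNormedModule)).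
  intros r _. unfold bform_density. continuity_R.
Qed.

Lemma gammak_pencil (t : R) :
  gammak n alpha kappa Rad (pencil v w t) =
  / 2 * (t ^ 2 * bform n c Rad v dv v dv + (2 * t) * bform n c Rad v dv w dw
         + 1 * bform n c Rad w dw w dw + (2 * / alpha) * sat_energy alpha Rad v w t).
Proof.
  unfold gammak, bform, sat_energy. apply Rmult_eq_compat_l.
  rewrite <- (RInt_lincomb4 (bform_density n c v dv v dv) (bform_density n c v dv w dw)
    (bform_density n c w dw w dw) (fun r => r * sat alpha (pencil v w t r))).
  2-4: apply ex_RInt_bform; assumption.
  2: apply ex_RInt_sat_pencil.
  apply RInt_ext. intros r Hr. rewrite Rmin_left, Rmax_right in Hr by lra.
  as_R_eq. rewrite (is_derive_unique _ _ _ (pencil_derive t r)).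
  unfold bform_density, pencil, sat, c. pose proof (pow2_ge_0 (r * (t * v r + w r))).
  field. split; [nra | lra].
Qed.

Lemma sat_energy_bounds (t : R) : 0 <= sat_energy alpha Rad v w t <= Rad ^ 2 / alpha.
Proof.
  assert (Hh : forall r, 0 <= r <= Rad -> 0 <= r * sat alpha (pencil v w t r) <= Rad / alpha).
  { intros r Hr. destruct (sat_bounds alpha (pencil v w t r) Halpha).
    split; [nra|]. unfold Rdiv. apply Rmult_le_compat; lra. }
  unfold sat_energy. split.
  - apply RInt_ge_0; [lra | apply ex_RInt_sat_pencil |]. intros r Hr. apply Hh. lra.
  - eapply Rle_trans; [apply Rle_abs|].
    replace (Rad ^ 2 / alpha) with ((Rad - 0) * (Rad / alpha)) by (field; lra).
    apply abs_RInt_le_const; [lra | apply ex_RInt_sat_pencil |].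
    intros r Hr. rewrite Rabs_pos_eq; apply Hh; assumption.
Qed.

Lemma continuous_sat_energy (t : R) : continuous (sat_energy alpha Rad v w) t.
Proof.
  unfold sat_energy.
  apply (continuous_of_lipschitz _ (RInt (fun r => Rad * (1 + / alpha) * (r * Rabs (v r))) 0 Rad)).
  intros t1 t2. rewrite Rmult_comm.
  apply (RInt_lipschitz_param (fun t r => r * sat alpha (pencil v w t r)));
    [lra | apply ex_RInt_sat_pencil | |].
  - apply (ex_RInt_continuous (V := R_CompleteNormedModule)). intros r _.
    apply (continuous_mult (fun _ => Rad * (1 + / alpha)) (fun r => r * Rabs (v r)));
      [apply continuous_const|].
    apply (continuous_mult (fun r => r) (fun r => Rabs (v r))); [apply continuous_id|].
    apply continuous_Rabs_comp. apply Cv.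
  - intros s1 s2 r Hr. unfold pencil.
    rewrite <- Rmult_minus_distr_l, Rabs_mult, (Rabs_pos_eq r) by lra.
    eapply Rle_trans.
    + apply Rmult_le_compat_l; [lra | apply sat_lipschitz; assumption].
    + replace (r * (s1 * v r + w r) - r * (s2 * v r + w r)) with ((s1 - s2) * (r * v r)) by ring.
      rewrite Rabs_mult, Rabs_mult, (Rabs_pos_eq r) by lra.
      set (X := (1 + / alpha) * (Rabs (s1 - s2) * (r * Rabs (v r)))).
      replace (Rabs (s1 - s2) * (Rad * (1 + / alpha) * (r * Rabs (v r)))) with (Rad * X)
        by (unfold X; ring).
      apply Rmult_le_compat_r; [|lra].
      pose proof (Rabs_pos (s1 - s2)). pose proof (Rabs_pos (v r)).
      pose proof (Rinv_0_lt_compat alpha Halpha).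
      unfold X. apply Rmult_le_pos; [lra|]. apply Rmult_le_pos; [assumption|]. nra.
Qed.

Lemma C1_0_pencil (t : R) : v Rad = 0 -> w Rad = 0 -> C1_0 Rad (pencil v w t).
Proof.
  intros HvR HwR. split; [|split; [|split]].
  - intros r. eexists. apply pencil_derive.
  - intros r. apply (continuous_ext (fun r => t * dv r + dw r)).
    + intros x. symmetry. apply is_derive_unique, pencil_derive.
    + continuity_R.
  - unfold pencil. ring.
  - unfold pencil. rewrite HvR, HwR. ring.
Qed.

Lemma normH2_pencil_pos (t : R) : 0 < t ->
  (forall r, 0 < r < Rad -> 0 < v r) -> (forall r, 0 < r < Rad -> 0 < w r) ->
  0 < normH2 Rad (pencil v w t).
Proof.
  intros Ht Hv Hw. unfold normH2.
  rewrite (RInt_ext _ (fun r => r * (t * dv r + dw r) ^ 2 + r * (t * v r + w r) ^ 2)).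
  - apply RInt_gt_0; [lra | | intros; continuity_R].
    intros r Hr. pose proof (Hv r Hr). pose proof (Hw r Hr).
    assert (0 < t * v r + w r) by nra.
    assert (0 <= r * (t * dv r + dw r) ^ 2) by (pose proof (pow2_ge_0 (t * dv r + dw r)); nra).
    assert (0 < r * (t * v r + w r) ^ 2) by (apply Rmult_lt_0_compat; [lra | apply pow_lt; lra]).
    lra.
  - intros r Hr. rewrite Rmin_left, Rmax_right in Hr by lra.
    as_R_eq. rewrite (is_derive_unique _ _ _ (pencil_derive t r)).
    unfold pencil. field. lra.
Qed.

Lemma gammak_pencil_root :
  bform n c Rad v dv v dv < 0 -> 0 < bform n c Rad w dw w dw ->
  exists z, 0 < z /\ gammak n alpha kappa Rad (pencil v w z) = 0.
Proof.
  intros Hneg Hpos.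
  destruct (concave_quadratic_perturbed_root (/ 2 * bform n c Rad v dv v dv)
              (bform n c Rad v dv w dw) (/ 2 * bform n c Rad w dw w dw)
              (/ alpha * (Rad ^ 2 / alpha)) (fun t => / alpha * sat_energy alpha Rad v w t))
    as [z [Hz Hroot]].
  - lra.
  - lra.
  - intros t. pose proof (Rinv_0_lt_compat alpha Halpha). destruct (sat_energy_bounds t).
    split; [nra | apply Rmult_le_compat_l; lra].
  - intros t. apply (continuous_mult (fun _ => / alpha) (sat_energy alpha Rad v w));
      [apply continuous_const | apply continuous_sat_energy].
  - exists z. split; [assumption|]. rewrite gammak_pencil. lra.
Qed.
End Pencil.

Theorem Nehari_nonempty_of_sign_change (n : Z) (alpha kappa Rad : R) (v dv w dw : R -> R) :
  0 < alpha -> 0 < Rad -> positive_profile Rad v dv -> positive_profile Rad w dw ->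
  bform n (/ alpha - kappa) Rad v dv v dv < 0 -> 0 < bform n (/ alpha - kappa) Rad w dw w dw ->
  Nehari_nonempty n alpha kappa Rad.
Proof.
  intros Halpha HRad [Dv [Cv [Cdv [HvR Hv]]]] [Dw [Cw [Cdw [HwR Hw]]]] Hneg Hpos.
  destruct (gammak_pencil_root n alpha kappa Rad v dv w dw) as [z [Hz Hroot]]; try assumption.
  apply (Nehari_nonempty_of_root n alpha kappa Rad (pencil v w z));
    [apply (C1_0_pencil Rad v dv w dw) | apply Rgt_not_eq, (normH2_pencil_pos Rad v dv w dw) | ];
    assumption.
Qed.

Definition pow_profile (Rad : R) (k : nat) (r : R) : R := (Rad - r) ^ S k.
Definition pow_profile_derivative (Rad : R) (k : nat) (r : R) : R :=
  (Rad - r) ^ S k - INR (S k) * r * (Rad - r) ^ k.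

Lemma positive_profile_pow (Rad : R) (k : nat) : 0 < Rad ->
  positive_profile Rad (pow_profile Rad k) (pow_profile_derivative Rad k).
Proof.
  intros HRad. unfold pow_profile, pow_profile_derivative.
  split; [|split; [|split; [|split]]].
  - intros r. auto_derive; [exact I|]. as_R_eq.
    change (match k with 0%nat => 1 | S _ => INR k + 1 end) with (INR (S k)).
    rewrite <- tech_pow_Rmult. unfold Rminus. set (Y := (Rad + - r) ^ k). ring.
  - intros r. continuity_R.
  - intros r. continuity_R.
  - rewrite Rminus_diag. apply pow_ne_zero; lia.
  - intros r Hr. apply pow_lt. lra.
Qed.

Definition quad_profile (Rad r : R) : R := r * (Rad - r).
Definition quad_profile_derivative (Rad r : R) : R := 2 * Rad * r - 3 * r ^ 2.

Lemma positive_profile_quad (Rad : R) : 0 < Rad ->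
  positive_profile Rad (quad_profile Rad) (quad_profile_derivative Rad).
Proof.
  intros HRad. unfold quad_profile, quad_profile_derivative.
  split; [|split; [|split; [|split]]].
  - intros r. auto_derive; [exact I|]. as_R_eq. ring.
  - intros r. continuity_R.
  - intros r. continuity_R.
  - ring.
  - intros r Hr. apply Rmult_lt_0_compat; lra.
Qed.

Lemma is_RInt_mul_pow_sub (Rad : R) (q : nat) :
  is_RInt (fun r => r * (Rad - r) ^ q) 0 Rad (Rad ^ (q + 2) / ((INR q + 1) * (INR q + 2))).
Proof.
  pose proof (pos_INR q) as Hq.
  set (F := fun r => - (Rad * (Rad - r) ^ (q + 1) / (INR q + 1)
                      - (Rad - r) ^ (q + 2) / (INR q + 2))).
  replace (Rad ^ (q + 2) / ((INR q + 1) * (INR q + 2))) with (minus (F Rad) (F 0)).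
  - apply (is_RInt_derive (V := R_CompleteNormedModule) F).
    + intros r _. unfold F. auto_derive; [repeat split; lra|]. as_R_eq.
      replace (Init.Nat.pred (q + 1)) with q by lia.
      replace (Init.Nat.pred (q + 2)) with (q + 1)%nat by lia.
      rewrite !plus_INR, pow_add. simpl INR. unfold Rminus. set (Y := (Rad + - r) ^ q).
      field. lra.
    + intros r _. continuity_R.
  - unfold F. rewrite Rminus_diag, Rminus_0_r, !pow_add. unfold minus, plus, opp. simpl.
    field. lra.
Qed.

Lemma is_RInt_cube_mul_pow_sub (Rad : R) (q : nat) :
  is_RInt (fun r => r ^ 3 * (Rad - r) ^ q) 0 Rad
    (6 * Rad ^ (q + 4) / ((INR q + 1) * (INR q + 2) * (INR q + 3) * (INR q + 4))).
Proof.
  pose proof (pos_INR q) as Hq.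
  set (F := fun r => - (Rad ^ 3 * (Rad - r) ^ (q + 1) / (INR q + 1)
                      - 3 * Rad ^ 2 * (Rad - r) ^ (q + 2) / (INR q + 2)
                      + 3 * Rad * (Rad - r) ^ (q + 3) / (INR q + 3)
                      - (Rad - r) ^ (q + 4) / (INR q + 4))).
  replace (6 * Rad ^ (q + 4) / ((INR q + 1) * (INR q + 2) * (INR q + 3) * (INR q + 4)))
    with (minus (F Rad) (F 0)).
  - apply (is_RInt_derive (V := R_CompleteNormedModule) F).
    + intros r _. unfold F. auto_derive; [repeat split; lra|]. as_R_eq.
      replace (Init.Nat.pred (q + 1)) with q by lia.
      replace (Init.Nat.pred (q + 2)) with (q + 1)%nat by lia.
      replace (Init.Nat.pred (q + 3)) with (q + 2)%nat by lia.
      replace (Init.Nat.pred (q + 4)) with (q + 3)%nat by lia.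
      rewrite !plus_INR, !pow_add. simpl INR. unfold Rminus. set (Y := (Rad + - r) ^ q).
      field. lra.
    + intros r _. continuity_R.
  - unfold F. rewrite Rminus_diag, Rminus_0_r, !pow_add. unfold minus, plus, opp. simpl.
    field. lra.
Qed.

Lemma bform_pow_profile_pos (n : Z) (c Rad : R) (k : nat) :
  0 < Rad -> 1 <= IZR n ^ 2 -> 12 * c * Rad ^ 2 < (2 * INR k + 5) * (2 * INR k + 6) ->
  0 < bform n c Rad (pow_profile Rad k) (pow_profile_derivative Rad k)
                    (pow_profile Rad k) (pow_profile_derivative Rad k).
Proof.
  intros HRad Hn Hk.
  set (q := (S k + S k)%nat).
  assert (Hq : INR q = 2 * INR k + 2) by (unfold q; rewrite plus_INR, S_INR; ring).
  set (lower := fun r => IZR n ^ 2 * (r * (Rad - r) ^ q) - 2 * c * (r ^ 3 * (Rad - r) ^ q)).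
  set (I := IZR n ^ 2 * (Rad ^ (q + 2) / ((INR q + 1) * (INR q + 2)))
            - 2 * c * (6 * Rad ^ (q + 4)
                       / ((INR q + 1) * (INR q + 2) * (INR q + 3) * (INR q + 4)))).
  assert (Hlower : is_RInt lower 0 Rad I).
  { apply (is_RInt_minus (fun r => IZR n ^ 2 * (r * (Rad - r) ^ q))
                         (fun r => 2 * c * (r ^ 3 * (Rad - r) ^ q)));
      apply (is_RInt_scal (V := R_NormedModule)).
    - apply is_RInt_mul_pow_sub.
    - apply is_RInt_cube_mul_pow_sub. }
  (* Dropping [r dv^2 >= 0] leaves two Beta integrals; the [r^3] one is smaller by a factor
     [O(Rad^2 / q^2)]. *)
  assert (HI : 0 < I).
  { pose proof (pos_INR k). unfold I. rewrite Hq.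
    replace (Rad ^ (q + 4)) with (Rad ^ (q + 2) * Rad ^ 2) by (rewrite <- pow_add; f_equal; lia).
    assert (HR : 0 < Rad ^ (q + 2)) by (apply pow_lt; lra).
    set (P := Rad ^ (q + 2)) in *. set (x := INR k) in *.
    replace (IZR n ^ 2 * (P / ((2 * x + 2 + 1) * (2 * x + 2 + 2))) -
             2 * c * (6 * (P * Rad ^ 2)
                      / ((2 * x + 2 + 1) * (2 * x + 2 + 2) * (2 * x + 2 + 3) * (2 * x + 2 + 4))))
      with (P * (IZR n ^ 2 * ((2 * x + 5) * (2 * x + 6)) - 12 * c * Rad ^ 2)
            / ((2 * x + 3) * (2 * x + 4) * (2 * x + 5) * (2 * x + 6))) by (field; lra).
    apply Rdiv_lt_0_compat; [|repeat apply Rmult_lt_0_compat; lra].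
    apply Rmult_lt_0_compat; [assumption|].
    assert ((2 * x + 5) * (2 * x + 6) <= IZR n ^ 2 * ((2 * x + 5) * (2 * x + 6))) by nra.
    lra. }
  rewrite <- (is_RInt_unique _ _ _ _ Hlower) in HI.
  eapply Rlt_le_trans; [exact HI|].
  apply RInt_le; [lra | eexists; exact Hlower | |].
  - apply (ex_RInt_continuous (V := R_CompleteNormedModule)). intros r _.
    unfold bform_density, pow_profile, pow_profile_derivative. continuity_R.
  - intros r Hr. unfold lower, bform_density, pow_profile, q. rewrite pow_add.
    set (d := pow_profile_derivative Rad k r).
    assert (0 <= r * d * d) by (pose proof (pow2_ge_0 d); nra).
    lra.
Qed.

Lemma bform_pow_profile_0 (n : Z) (c Rad : R) :
  bform n c Rad (pow_profile Rad 0) (pow_profile_derivative Rad 0)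
                (pow_profile Rad 0) (pow_profile_derivative Rad 0) =
  Rad ^ 4 / 6 + IZR n ^ 2 * Rad ^ 4 / 12 - c * Rad ^ 6 / 30.
Proof.
  set (n2 := IZR n ^ 2).
  set (P := fun r => Rad ^ 2 * r ^ 2 / 2 - 4 * Rad * r ^ 3 / 3 + r ^ 4
            + n2 * (Rad ^ 2 * r ^ 2 / 2 - 2 * Rad * r ^ 3 / 3 + r ^ 4 / 4)
            - 2 * c * (Rad ^ 2 * r ^ 4 / 4 - 2 * Rad * r ^ 5 / 5 + r ^ 6 / 6)).
  unfold bform. rewrite (is_RInt_unique _ _ _ (minus (P Rad) (P 0))).
  - unfold minus, plus, opp, P. simpl. field.
  - apply (is_RInt_derive (V := R_CompleteNormedModule) P).
    + intros r _. unfold P. auto_derive; [exact I|]. as_R_eq.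
      unfold bform_density, pow_profile, pow_profile_derivative, n2. simpl. field.
    + intros r _. unfold bform_density, pow_profile, pow_profile_derivative. continuity_R.
Qed.

Lemma bform_quad_profile (n : Z) (c Rad : R) :
  bform n c Rad (quad_profile Rad) (quad_profile_derivative Rad)
                (quad_profile Rad) (quad_profile_derivative Rad) =
  Rad ^ 6 / 10 + IZR n ^ 2 * Rad ^ 6 / 60 - c * Rad ^ 8 / 84.
Proof.
  set (n2 := IZR n ^ 2).
  set (P := fun r => Rad ^ 2 * r ^ 4 - 12 * Rad * r ^ 5 / 5 + 3 * r ^ 6 / 2
            + n2 * (Rad ^ 2 * r ^ 4 / 4 - 2 * Rad * r ^ 5 / 5 + r ^ 6 / 6)
            - 2 * c * (Rad ^ 2 * r ^ 6 / 6 - 2 * Rad * r ^ 7 / 7 + r ^ 8 / 8)).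
  unfold bform. rewrite (is_RInt_unique _ _ _ (minus (P Rad) (P 0))).
  - unfold minus, plus, opp, P. simpl. field.
  - apply (is_RInt_derive (V := R_CompleteNormedModule) P).
    + intros r _. unfold P. auto_derive; [exact I|]. as_R_eq.
      unfold bform_density, quad_profile, quad_profile_derivative, n2. field.
    + intros r _. unfold bform_density, quad_profile, quad_profile_derivative. continuity_R.
Qed.

Lemma ln_2_gt_2_3 : 2 / 3 < ln 2.
Proof.
  set (e := exp (1 / 24)).
  assert (He : e <= 24 / 23).
  { pose proof (exp_ineq1_le (- (1 / 24))). pose proof (exp_pos (1 / 24)).
    assert (e * exp (- (1 / 24)) = 1)
      by (unfold e; rewrite <- exp_plus, Rplus_opp_r; apply exp_0).
    nra. }
  assert (He16 : e ^ 16 < 2).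
  { apply Rle_lt_trans with ((24 / 23) ^ 16).
    - apply pow_incr. split; [left; apply exp_pos | exact He].
    - simpl. lra. }
  assert (Hln : ln (e ^ 16) = 2 / 3)
    by (unfold e; rewrite ln_pow, ln_exp by apply exp_pos; simpl; field).
  rewrite <- Hln. apply ln_increasing; [apply pow_lt, exp_pos | exact He16].
Qed.

Lemma lt_mul_sqr_of_sqrt_div_lt (x c b : R) : 0 < c -> 0 < b -> sqrt (x / c) < b -> x < c * b ^ 2.
Proof.
  intros Hc Hb Hs. pose proof (pow_lt b 2 Hb).
  destruct (Rle_lt_dec x 0) as [Hx | Hx]; [nra|].
  assert (Hxc : 0 <= x / c) by (apply Rdiv_le_0_compat; lra).
  pose proof (sqrt_sqrt _ Hxc). pose proof (sqrt_pos (x / c)).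
  assert (x / c < b ^ 2) by nra.
  replace x with (x / c * c) by (field; lra). nra.
Qed.

Lemma sqr_IZR_cases (n : Z) : (1 <= Z.abs n)%Z -> IZR n ^ 2 = 1 \/ 4 <= IZR n ^ 2.
Proof.
  intros Hn. rewrite <- pow2_abs, <- abs_IZR.
  destruct (Z.eq_dec (Z.abs n) 1) as [E | E].
  - left. rewrite E. simpl. ring.
  - right. assert (2 <= IZR (Z.abs n)) by (apply IZR_le; lia). nra.
Qed.

Lemma exists_negative_profile (n : Z) (c Rad : R) :
  (1 <= Z.abs n)%Z -> 0 < Rad -> 6 * (1 + IZR n ^ 2 * (2 * ln 2 - 1)) < c * Rad ^ 2 ->
  exists v dv, positive_profile Rad v dv /\ bform n c Rad v dv v dv < 0.
Proof.
  intros Hn HRad Hc. pose proof ln_2_gt_2_3.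
  destruct (sqr_IZR_cases n Hn) as [Hn2 | Hn2].
  - exists (pow_profile Rad 0), (pow_profile_derivative Rad 0).
    split; [apply positive_profile_pow; assumption|].
    rewrite bform_pow_profile_0, Hn2. rewrite Hn2 in Hc.
    assert (HR4 : 0 < Rad ^ 4) by (apply pow_lt; lra).
    replace (Rad ^ 6) with (Rad ^ 4 * Rad ^ 2) by ring. nra.
  - exists (quad_profile Rad), (quad_profile_derivative Rad).
    split; [apply positive_profile_quad; assumption|].
    rewrite bform_quad_profile.
    assert (HR6 : 0 < Rad ^ 6) by (apply pow_lt; lra).
    replace (Rad ^ 8) with (Rad ^ 6 * Rad ^ 2) by ring. nra.
Qed.

Lemma exists_positive_profile (n : Z) (c Rad : R) :
  (1 <= Z.abs n)%Z -> 0 < Rad ->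
  exists w dw, positive_profile Rad w dw /\ 0 < bform n c Rad w dw w dw.
Proof.
  intros Hn HRad.
  assert (Hn2 : 1 <= IZR n ^ 2) by (destruct (sqr_IZR_cases n Hn); lra).
  destruct (INR_archimed 1 (Rabs (12 * c * Rad ^ 2))) as [k Hk]; [lra|].
  exists (pow_profile Rad k), (pow_profile_derivative Rad k).
  split; [apply positive_profile_pow; assumption|].
  apply bform_pow_profile_pos; try assumption.
  pose proof (pos_INR k). pose proof (Rle_abs (12 * c * Rad ^ 2)). nra.
Qed.

Theorem lemma4p2 (r0 : R) (n : Z) (alpha Rad kappa : R) :
  first_pos_zero_J0 r0 ->
  (1 <= Z.abs n)%Z ->
  0 < alpha ->
  0 < Rad ->
  kappa < / alpha - (r0 ^ 2 + (IZR n) ^ 2) / (2 * Rad ^ 2) ->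
  sqrt (6 * (1 + (IZR n) ^ 2 * (2 * ln 2 - 1)) / (/ alpha - kappa)) < Rad ->
  Nehari_nonempty n alpha kappa Rad.
Proof.
  (* [r0] only enters through [Hkappa], which is needed just for [alpha^-1 - kappa > 0]. *)
  intros _ Hn Halpha HRad Hkappa Hsqrt.
  assert (Hc : 0 < / alpha - kappa).
  { assert (0 <= (r0 ^ 2 + IZR n ^ 2) / (2 * Rad ^ 2)).
    { apply Rdiv_le_0_compat; [pose proof (pow2_ge_0 r0); pose proof (pow2_ge_0 (IZR n)); lra|].
      pose proof (pow_lt Rad 2 HRad). lra. }
    lra. }
  destruct (exists_negative_profile n (/ alpha - kappa) Rad) as [v [dv [Hv Hneg]]];
    [assumption | assumption | apply lt_mul_sqr_of_sqrt_div_lt; assumption |].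
  destruct (exists_positive_profile n (/ alpha - kappa) Rad) as [w [dw [Hw Hpos]]];
    [assumption | assumption |].
  exact (Nehari_nonempty_of_sign_change n alpha kappa Rad v dv w dw Halpha HRad Hv Hw Hneg Hpos).
Qed.
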